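(* (i) For every integer $k\ge 1$, the vector $(2,4,k,1)$ is not 0-realizable. (ii) The vector $(2,5,2,1)$ is not 0-realizable.
   Context: All graphs are finite, nonempty, and reflexive (every vertex has a loop). $N[v]$ is the closed neighborhood of $v$ (including $v$). For distinct $v,w$, $w$ strictly corners $v$ if $N[v]\subsetneq N[w]$; $v$ is then a strict corner. A vertex dominates a set if adjacent to all its vertices. Corner ranking: set $G^{(1)}=G$, $k=1$. If $G^{(k)}$ is a clique, give all its vertices rank $k$ and stop. Else if $G^{(k)}$ has no strict corners, give all its vertices rank $\infty$ and stop. Else give every strict corner of $G^{(k)}$ rank $k$, delete them to get $G^{(k+1)}$ (induced subgraph), increase $k$ and repeat. The corner rank of $G$ is the largest rank of a vertex; $X_k$ is the set of rank-$k$ vertices. A graph is cop-win iff its corner rank is finite. A graph of finite corner rank $\alpha\ge2$ is of type 1 if some (equivalently every) vertex of rank $\alpha$ dominates $V(G^{(\alpha-1)})$, and of type 0 otherwise. The rank cardinality vector is $(x_\alpha,\dots,x_1)$ with $x_k=|X_k|$. A vector (finite list of positive integers) is 0-realizable if it is the rank cardinality vector of some cop-win graph of type 0. *)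

From mathcomp Require Import all_boot.
Set Implicit Arguments. Unset Strict Implicit. Unset Printing Implicit Defensive.

(* A graph is a finite type T with an adjacency relation adj : rel T which is
   symmetric and reflexive (every vertex has a loop); nonemptiness is 0 < #|T|.
   Subgraphs G^(k) are induced subgraphs given by vertex sets S : {set T}. *)
Section CornerRanking.
Variables (T : finType) (adj : rel T).

Definition nbhd (S : {set T}) (v : T) : {set T} := [set w in S | adj v w].

Definition is_clique (S : {set T}) : bool :=
  [forall x in S, forall y in S, adj x y].

Definition strictly_corners (S : {set T}) (w v : T) : bool :=
  [&& w \in S, v \in S, w != v & nbhd S v \proper nbhd S w].

Definition strict_corners (S : {set T}) : {set T} :=
  [set v in S | [exists w, strictly_corners S w v]].

(* gseq k = V(G^(k+1)).  Once G^(k) is a clique or has no strict corner,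
   no vertex is removed any more (a clique has no strict corner). *)
Fixpoint gseq (k : nat) : {set T} :=
  if k is k'.+1 then gseq k' :\: strict_corners (gseq k') else [set: T].

(* the corner rank is finite and equals a: G^(a) is a clique and a is least *)
Definition corner_rank_is (a : nat) : Prop :=
  0 < a /\ is_clique (gseq a.-1) /\ forall j, j < a.-1 -> ~~ is_clique (gseq j).

(* X_j : vertices of rank j (1 <= j <= a), for corner rank a *)
Definition rank_class (a j : nat) : {set T} :=
  if j == a then gseq a.-1 else strict_corners (gseq j.-1).

Definition dominates (v : T) (S : {set T}) : bool := [forall x in S, adj v x].

(* type 0 (for corner rank a >= 2): no vertex of rank a dominates V(G^(a-1)) *)
Definition type0 (a : nat) : bool :=
  ~~ [exists v in rank_class a a, dominates v (gseq a.-2)].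

(* rank cardinality vector (x_a, ..., x_1) *)
Definition rank_card_vector (a : nat) : seq nat :=
  [seq #|rank_class a j| | j <- rev (iota 1 a)].

End CornerRanking.

(* s is 0-realizable: it is the rank cardinality vector of some cop-win graph
   of type 0 (type is only defined for corner rank >= 2). *)
Definition zero_realizable (s : seq nat) : Prop :=
  exists (T : finType) (adj : rel T) (a : nat),
    [/\ reflexive adj, symmetric adj & 0 < #|T|] /\
    [/\ corner_rank_is adj a, 2 <= a, type0 adj a &
        rank_card_vector adj a = s].

(* Let G have corner rank 4, type 0, |X_1| = 1 and X_4 = {c1, c2}.  A vertex of X_3 is strictly cornered in G^(3) by a vertex that is not a
   strict corner there, i.e. by c1 or c2.  If N[p] is strictly contained in N[q] in
   G^(3), some u in X_2 sees p but not q, since otherwise p would be a strict corner of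
   G^(2); and u is strictly cornered in G^(2) by some w in G^(3), which then sees all
   neighbours of u in G^(3).

   The unique vertex of X_1 sees all of X_2, and lifting its dominator gives h in G^(3)
   seeing all of X_2.  If h were c1, then c2 would dominate G^(3); so h lies in X_3
   below c1, say.  Type 0 yields x, z in X_3 with x not adjacent to c1 and z not
   adjacent to c2; the witnesses u, u2 in X_2 separating x from c2 and z from c1, and
   their dominators w, w2, make h, x, w, z four distinct vertices of X_3 with forced
   adjacencies.  If |X_3| = 4, w2 forces h to see z, and then h sees every neighbour of
   c1.  If |X_3| = 5 and X_2 = {u, u2}, the fifth vertex of X_3 is adjacent to neither
   w nor x, hence N[x] is strictly contained in N[w], but no vertex of X_2 separates
   x from w. *)

From mathcomp Require Import all_boot.
Set Implicit Arguments. Unset Strict Implicit. Unset Printing Implicit Defensive.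

Lemma mem_uniq_subset_card (T : finType) (A : {set T}) (s : seq T) :
  uniq s -> {subset s <= A} -> #|A| <= size s -> {subset A <= s}.
Proof.
move=> us sA le e eA.
have sAe : {subset s <= enum A} by move=> y /sA; rewrite mem_enum.
have le' : size (enum A) <= size s by rewrite -cardE.
by rewrite (uniq_min_size us sAe le').2 mem_enum.
Qed.

Section StrictCorners.
Variables (T : finType) (adj : rel T).
Hypotheses (adj_refl : reflexive adj) (adj_sym : symmetric adj).

Local Notation N := (nbhd adj).
Implicit Types (S A : {set T}) (v w y : T) (s : seq T).

Lemma adj_neq v a b : adj v a -> ~~ adj v b -> a != b.
Proof. by move=> va; apply: contraNneq => <-. Qed.

Lemma in_nbhd S v y : (y \in N S v) = (y \in S) && adj v y.
Proof. by rewrite inE. Qed.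

Lemma strict_cornerP S v :
  reflect (v \in S /\ exists2 w, w \in S & N S v \proper N S w)
          (v \in strict_corners adj S).
Proof.
rewrite inE; apply: (iffP andP) => [[vS /existsP[w /and4P[wS _ _ vw]]]|[vS [w wS vw]]].
  by split => //; exists w.
split => //; apply/existsP; exists w; apply/and4P; split => //.
by apply: contraTneq vw => ->; rewrite properxx.
Qed.

Lemma strict_corners_sub S : strict_corners adj S \subset S.
Proof. by apply/subsetP => v /strict_cornerP[]. Qed.

Lemma nbhd_sub_adj S v w y : N S v \subset N S w -> y \in S -> adj v y -> adj w y.
Proof. by move=> /subsetP vw yS vy; have := vw y; rewrite !in_nbhd yS vy => /(_ isT). Qed.

Lemma nbhd_sub_self S v w : N S v \subset N S w -> v \in S -> adj w v.
Proof. by move=> vw vS; apply: nbhd_sub_adj vw vS (adj_refl v). Qed.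

Lemma proper_nbhdP S v w : N S v \proper N S w ->
  exists2 e, e \in S & adj w e && ~~ adj v e.
Proof.
case/properP=> _ [e]; rewrite !in_nbhd => /andP[eS we].
by rewrite eS /= => nve; exists e; rewrite ?we.
Qed.

Lemma sub_nbhd_all S v w s : {subset S <= s} ->
  all [pred e | adj v e ==> adj w e] s -> N S v \subset N S w.
Proof.
move=> Ss /allP vw; apply/subsetP => e; rewrite !in_nbhd => /andP[eS ve].
by rewrite eS (implyP (vw e (Ss e eS))).
Qed.

Lemma proper_nbhd_extend A S v w : A \subset S -> N A v \proper N A w ->
  {in S :\: A, forall y, adj v y -> adj w y} -> N S v \proper N S w.
Proof.
move=> AS vw ext; apply/properP; split.
  apply/subsetP => y; rewrite !in_nbhd => /andP[yS vy]; rewrite yS /=.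
  have [yA|yA] := boolP (y \in A); first exact: nbhd_sub_adj (proper_sub vw) yA vy.
  by apply: ext vy; rewrite inE yA.
have [e eA /andP[we nve]] := proper_nbhdP vw.
by exists e; rewrite !in_nbhd (subsetP AS e eA) ?we.
Qed.

Lemma exists_noncorner_dominator S v w : w \in S -> N S v \proper N S w ->
  exists2 w', w' \in S :\: strict_corners adj S & N S v \proper N S w'.
Proof.
move=> wS vw.
pose P := [pred w' | (w' \in S) && (N S v \proper N S w')].
have [|w' /andP[w'S vw'] w'max] := @arg_maxnP _ w P (fun w' => #|N S w'|).
  by rewrite /P /= wS vw.
exists w' => //; rewrite inE w'S andbT; apply/strict_cornerP => -[_ [w'' w''S w'w'']].
have := w'max w''; rewrite /P /= w''S (proper_trans vw' w'w'') => /(_ isT).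
by rewrite leqNgt proper_card.
Qed.

Lemma strict_corner_dominator S v : v \in strict_corners adj S ->
  exists2 w, w \in S :\: strict_corners adj S & N S v \proper N S w.
Proof. by case/strict_cornerP=> _ [w wS vw]; apply: exists_noncorner_dominator vw. Qed.

Lemma noncorner_witness S p q : p \in S :\: strict_corners adj S -> q \in S ->
  N (S :\: strict_corners adj S) p \proper N (S :\: strict_corners adj S) q ->
  exists2 u, u \in strict_corners adj S & adj u p && ~~ adj u q.
Proof.
move=> /setDP[pS pNC] qS pq; apply/exists_inP; apply: contraNT pNC => /exists_inPn noU.
apply/strict_cornerP; split => //; exists q => //.
apply: proper_nbhd_extend pq _ => [|y]; first exact: subsetDl.
move=> /setDP[yS]; rewrite in_setD yS andbT negbK => yC.
by move: (noU y yC); rewrite negb_and negbK !(adj_sym y) => /orP[/negPf->|->].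
Qed.

Lemma unique_corner_adj S v : strict_corners adj S = [set v] ->
  {in strict_corners adj (S :\: strict_corners adj S), forall u, adj v u}.
Proof.
move=> Cv u uC'; apply/negPn/negP => nvu.
have /strict_cornerP[/setDP[uS uNC] [w /setDP[wS _] uw]] := uC'.
apply: (negP uNC); apply/strict_cornerP; split => //; exists w => //.
apply: proper_nbhd_extend uw _ => [|y]; first exact: subsetDl.
move=> /setDP[yS]; rewrite in_setD yS andbT negbK Cv in_set1 => /eqP->.
by rewrite adj_sym (negPf nvu).
Qed.

End StrictCorners.

Section RankFour.
Variables (T : finType) (adj : rel T).
Hypotheses (adj_refl : reflexive adj) (adj_sym : symmetric adj).

(* [gseq adj k] is V(G^(k+1)), so [C0], [C1], [C2] and [S3] are X_1, X_2, X_3 and X_4. *)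
Local Notation S1 := (gseq adj 1).
Local Notation S2 := (gseq adj 2).
Local Notation S3 := (gseq adj 3).
Local Notation C0 := (strict_corners adj [set: T]).
Local Notation C1 := (strict_corners adj S1).
Local Notation C2 := (strict_corners adj S2).
Local Notation N0 := (nbhd adj [set: T]).
Local Notation N1 := (nbhd adj S1).
Local Notation N2 := (nbhd adj S2).

Lemma in_gseqS k y :
  (y \in gseq adj k.+1) = (y \notin strict_corners adj (gseq adj k)) && (y \in gseq adj k).
Proof. by rewrite inE. Qed.

Lemma gseqS_sub k : gseq adj k.+1 \subset gseq adj k.
Proof. exact: subsetDl. Qed.

Lemma S2_S1 : {subset S2 <= S1}. Proof. exact/subsetP/gseqS_sub. Qed.
Lemma C1_S1 : {subset C1 <= S1}. Proof. exact/subsetP/strict_corners_sub. Qed.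
Lemma C2_S2 : {subset C2 <= S2}. Proof. exact/subsetP/strict_corners_sub. Qed.
Lemma S3_S2 : {subset S3 <= S2}. Proof. exact/subsetP/gseqS_sub. Qed.

Lemma exists_C1_dominator : #|C0| = 1 -> exists2 h, h \in S2 & {in C1, forall u, adj h u}.
Proof.
move=> /eqP/cards1P[v C0v].
have [w0 w0S1 vw0] : exists2 w0, w0 \in S1 & N0 v \proper N0 w0.
  by apply: strict_corner_dominator; rewrite C0v set11.
have w0C1 : {in C1, forall u, adj w0 u}.
  move=> u /(unique_corner_adj adj_sym C0v) vu.
  exact: nbhd_sub_adj (proper_sub vw0) (in_setT u) vu.
have [w0S2|w0NS2] := boolP (w0 \in S2); first by exists w0.
have [w1 w1S2 w0w1] : exists2 w1, w1 \in S2 & N1 w0 \proper N1 w1.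
  by apply: strict_corner_dominator; move: w0NS2; rewrite in_gseqS w0S1 andbT negbK.
by exists w1 => // u uC1; apply: nbhd_sub_adj (proper_sub w0w1) (C1_S1 uC1) (w0C1 u uC1).
Qed.

Lemma corner_below e : e \in C2 -> exists2 c, c \in S3 & N2 e \proper N2 c.
Proof. exact: strict_corner_dominator. Qed.

Section TopPair.
Variables c c' : T.
Hypothesis S3E : S3 = [set c; c'].

Lemma in_S2_pair e : (e \in S2) = [|| e == c, e == c' | e \in C2].
Proof.
have := in_gseqS 2 e; rewrite S3E in_set2.
have [eC2|_ /= <-] := boolP (e \in C2); last by rewrite orbF.
by rewrite (C2_S2 eC2) !orbT.
Qed.

Lemma S2_sub_pair s : {subset C2 <= s} -> {subset S2 <= [:: c, c' & s]}.
Proof.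
move=> C2s e; rewrite in_S2_pair => /or3P[/eqP->|/eqP->|/C2s es];
  by rewrite !inE ?eqxx ?es ?orbT.
Qed.

Lemma corner_below_pair e y : e \in C2 -> y \in S2 -> adj e y -> ~~ adj c y ->
  N2 e \proper N2 c'.
Proof.
move=> /corner_below[d] + ed yS2 ey cNy.
rewrite S3E !inE => /orP[]/eqP dE; rewrite dE in ed => //.
by move: cNy; rewrite (nbhd_sub_adj (proper_sub ed) yS2 ey).
Qed.

Lemma far_corner : adj c c' -> ~~ dominates adj c S2 ->
  exists2 x, x \in C2 & ~~ adj c x && (N2 x \proper N2 c').
Proof.
move=> cc' /forall_inPn[x xS2 cNx]; have xC2 : x \in C2.
  by move: xS2 cNx; rewrite in_S2_pair => /or3P[/eqP->|/eqP->|//]; rewrite ?adj_refl ?cc'.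
by exists x; rewrite // cNx (corner_below_pair xC2 xS2 (adj_refl x)).
Qed.

Lemma top_dominates : adj c c' -> {in C1, forall u, adj c u} -> dominates adj c' S2.
Proof.
move=> cc' cC1; apply/forall_inP => y; rewrite in_S2_pair => /or3P[/eqP->|/eqP->|yC2].
- by rewrite adj_sym.
- exact: adj_refl.
have [d] := corner_below yC2; rewrite S3E !inE => /orP[]/eqP-> yd.
  have cS2 : c \in S2 by rewrite S3_S2 // S3E !inE eqxx.
  have [u uC1 /andP[_ uNc]] := noncorner_witness adj_sym (C2_S2 yC2) (S2_S1 cS2) yd.
  by rewrite adj_sym cC1 in uNc.
exact: nbhd_sub_self (proper_sub yd) (C2_S2 yC2).
Qed.

End TopPair.

Section Configuration.
Variables c1 c2 h x u w z u2 w2 : T.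
Hypothesis S3E : S3 = [set c1; c2].
Hypotheses (h_C2 : h \in C2) (h_C1 : {in C1, forall v, adj h v}).
Hypothesis h_below_c1 : N2 h \proper N2 c1.
Hypotheses (x_C2 : x \in C2) (nadj_c1x : ~~ adj c1 x) (x_below_c2 : N2 x \proper N2 c2).
Hypotheses (u_C1 : u \in C1) (adj_ux : adj u x) (nadj_uc2 : ~~ adj u c2).
Hypotheses (w_S2 : w \in S2) (u_under_w : N1 u \subset N1 w).
Hypotheses (z_C2 : z \in C2) (nadj_c2z : ~~ adj c2 z) (z_below_c1 : N2 z \proper N2 c1).
Hypotheses (u2_C1 : u2 \in C1) (adj_u2z : adj u2 z) (nadj_u2c1 : ~~ adj u2 c1).
Hypotheses (w2_S2 : w2 \in S2) (u2_under_w2 : N1 u2 \subset N1 w2).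

Let h_S2 := C2_S2 h_C2.
Let x_S2 := C2_S2 x_C2.
Let z_S2 := C2_S2 z_C2.

Lemma adj_c1h : adj c1 h. Proof. exact: nbhd_sub_self (proper_sub h_below_c1) h_S2. Qed.
Lemma adj_c2x : adj c2 x. Proof. exact: nbhd_sub_self (proper_sub x_below_c2) x_S2. Qed.

Lemma nadj_hx : ~~ adj h x.
Proof. exact: contra (nbhd_sub_adj (proper_sub h_below_c1) x_S2) nadj_c1x. Qed.

Lemma nadj_xz : ~~ adj x z.
Proof. exact: contra (nbhd_sub_adj (proper_sub x_below_c2) z_S2) nadj_c2z. Qed.

Lemma adj_wu : adj w u. Proof. exact: nbhd_sub_self u_under_w (C1_S1 u_C1). Qed.
Lemma adj_wx : adj w x. Proof. exact: nbhd_sub_adj u_under_w (S2_S1 x_S2) adj_ux. Qed.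

Lemma adj_wh : adj w h.
Proof. by apply: nbhd_sub_adj u_under_w (S2_S1 h_S2) _; rewrite adj_sym h_C1. Qed.

Lemma adj_c1w : adj c1 w.
Proof. by apply: nbhd_sub_adj (proper_sub h_below_c1) w_S2 _; rewrite adj_sym adj_wh. Qed.

Lemma adj_c2w : adj c2 w.
Proof. by apply: nbhd_sub_adj (proper_sub x_below_c2) w_S2 _; rewrite adj_sym adj_wx. Qed.

Lemma w_C2 : w \in C2.
Proof.
move: w_S2; rewrite (in_S2_pair S3E) => /or3P[/eqP wE|/eqP wE|//].
  by move: nadj_c1x; rewrite -wE adj_wx.
by move: nadj_uc2; rewrite -wE adj_sym adj_wu.
Qed.

Lemma w_below_c2 : N2 w \proper N2 c2.
Proof. exact: (corner_below_pair S3E w_C2 x_S2 adj_wx nadj_c1x). Qed.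

Lemma adj_c2h : adj c2 h.
Proof. exact: nbhd_sub_adj (proper_sub w_below_c2) h_S2 adj_wh. Qed.

Lemma nadj_wz : ~~ adj w z.
Proof. exact: contra (nbhd_sub_adj (proper_sub w_below_c2) z_S2) nadj_c2z. Qed.

Lemma adj_w2u2 : adj w2 u2. Proof. exact: nbhd_sub_self u2_under_w2 (C1_S1 u2_C1). Qed.
Lemma adj_w2z : adj w2 z. Proof. exact: nbhd_sub_adj u2_under_w2 (S2_S1 z_S2) adj_u2z. Qed.

Lemma adj_w2h : adj w2 h.
Proof. by apply: nbhd_sub_adj u2_under_w2 (S2_S1 h_S2) _; rewrite adj_sym h_C1. Qed.

Lemma adj_c1w2 : adj c1 w2.
Proof. by apply: nbhd_sub_adj (proper_sub z_below_c1) w2_S2 _; rewrite adj_sym adj_w2z. Qed.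

Lemma w2_C2 : w2 \in C2.
Proof.
move: w2_S2; rewrite (in_S2_pair S3E) => /or3P[/eqP wE|/eqP wE|//].
  by move: nadj_u2c1; rewrite -wE adj_sym adj_w2u2.
by move: nadj_c2z; rewrite -wE adj_w2z.
Qed.

Lemma uniq_hxwz : uniq [:: h; x; w; z].
Proof.
have adj_xw : adj x w by rewrite adj_sym adj_wx.
have nadj_xh : ~~ adj x h by rewrite adj_sym nadj_hx.
rewrite /= !inE !negb_or (adj_neq adj_c1h nadj_c1x) (adj_neq adj_c2h nadj_c2z).
rewrite (adj_neq adj_c2x nadj_c2z) (adj_neq adj_c2w nadj_c2z) (eq_sym h w) (eq_sym x w).
by rewrite (adj_neq adj_xw nadj_xh) (adj_neq adj_c1w nadj_c1x).
Qed.

Lemma four_corners_contra : #|C2| = 4 -> False.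
Proof.
move=> C2_4; have C2_hxwz : {subset C2 <= [:: h; x; w; z]}.
  apply: mem_uniq_subset_card uniq_hxwz _ _; last by rewrite C2_4.
  by apply/allP; rewrite /= h_C2 x_C2 w_C2 z_C2.
have adj_hz : adj h z.
  move: adj_c1w2 adj_w2z adj_w2h; have := C2_hxwz _ w2_C2; rewrite !inE.
  case/or4P=> /eqP->; rewrite ?(negPf nadj_c1x) ?(negPf nadj_wz) // => _ _.
  by rewrite adj_sym.
apply: (negP (proper_subn h_below_c1)); apply: sub_nbhd_all (S2_sub_pair S3E C2_hxwz) _.
rewrite /= adj_hz !(adj_sym h) adj_c1h adj_c2h adj_wh (negPf nadj_c1x).
by rewrite !adj_refl !implybT.
Qed.

Section FiveCorners.
Variable y : T.
Hypotheses (y_C2 : y \in C2) (y_new : y \notin [:: h; x; w; z]).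
Hypotheses (C2_5 : #|C2| = 5) (C1_2 : #|C1| = 2).

Let y_S2 := C2_S2 y_C2.

Lemma C2_yhxwz : {subset C2 <= [:: y; h; x; w; z]}.
Proof.
apply: mem_uniq_subset_card; first by rewrite cons_uniq y_new uniq_hxwz.
  by apply/allP; rewrite /= y_C2 h_C2 x_C2 w_C2 z_C2.
by rewrite C2_5.
Qed.

Lemma C1_uu2 : {subset C1 <= [:: u; u2]}.
Proof.
apply: mem_uniq_subset_card; last by rewrite C1_2.
  rewrite /= inE andbT; apply: contra nadj_wz => /eqP uE.
  by apply: nbhd_sub_adj u_under_w (S2_S1 z_S2) _; rewrite uE.
by apply/allP; rewrite /= u_C1 u2_C1.
Qed.

Let S2_sub := S2_sub_pair S3E C2_yhxwz.

Lemma nadj_wy : ~~ adj w y.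
Proof.
apply/negP => adj_wy; apply: (negP (proper_subn w_below_c2)); apply: sub_nbhd_all S2_sub _.
rewrite /= adj_wy adj_wh adj_wx (negPf nadj_c2z) !(adj_sym w) adj_c1w adj_c2w.
by rewrite !adj_refl !implybT.
Qed.

Lemma nadj_w2x : ~~ adj w2 x.
Proof.
apply/negP => adj_w2x; have [c] := corner_below w2_C2; rewrite S3E !inE => /orP[]/eqP-> w2c.
  by move: nadj_c1x; rewrite (nbhd_sub_adj (proper_sub w2c) x_S2 adj_w2x).
by move: nadj_c2z; rewrite (nbhd_sub_adj (proper_sub w2c) z_S2 adj_w2z).
Qed.

Lemma nadj_hz_hy : ~~ (adj h z && adj h y).
Proof.
apply/andP => -[adj_hz adj_hy]; apply: (negP (proper_subn h_below_c1)).
apply: sub_nbhd_all S2_sub _.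
rewrite /= adj_hz adj_hy !(adj_sym h) adj_c1h adj_c2h adj_wh (negPf nadj_c1x).
by rewrite !adj_refl !implybT.
Qed.

Lemma nadj_xy : ~~ adj x y.
Proof.
apply/negP => adj_xy.
have y_below_c2 : N2 y \proper N2 c2.
  by apply: (corner_below_pair S3E y_C2 x_S2); rewrite // adj_sym.
have nadj_yz : ~~ adj y z := contra (nbhd_sub_adj (proper_sub y_below_c2) z_S2) nadj_c2z.
have c2_S2 : c2 \in S2 by rewrite S3_S2 // S3E !inE eqxx orbT.
have [v /C1_uu2 + /andP[adj_vy _]] :=
  noncorner_witness adj_sym y_S2 (S2_S1 c2_S2) y_below_c2.
rewrite !inE => /orP[]/eqP vE; rewrite vE in adj_vy.
  by move: nadj_wy; rewrite (nbhd_sub_adj u_under_w (S2_S1 y_S2) adj_vy).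
have adj_w2y := nbhd_sub_adj u2_under_w2 (S2_S1 y_S2) adj_vy.
move: nadj_hz_hy adj_c1w2 adj_w2z adj_w2h adj_w2y; have := C2_yhxwz w2_C2.
rewrite !inE => /orP[|/or4P[]] /eqP->; rewrite ?(negPf nadj_c1x) ?(negPf nadj_wz) //.
- by rewrite (negPf nadj_yz).
- by move=> /negP hzy _ hz _ hy; apply: hzy; rewrite hz hy.
- by rewrite (adj_sym z y) (negPf nadj_yz).
Qed.

Lemma x_below_w : N2 x \proper N2 w.
Proof.
apply/properP; split.
  apply: sub_nbhd_all S2_sub _.
  rewrite /= adj_wx (adj_sym w c2) adj_c2w (negPf nadj_xy) (negPf nadj_xz).
  rewrite (adj_sym x c1) (adj_sym x h) (negPf nadj_c1x) (negPf nadj_hx).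
  by rewrite !adj_refl !implybT.
have c1_S2 : c1 \in S2 by rewrite S3_S2 // S3E !inE eqxx.
by exists c1; rewrite !in_nbhd c1_S2 /= adj_sym ?adj_c1w ?nadj_c1x.
Qed.

Lemma five_corners_contra : False.
Proof.
have [v /C1_uu2 + /andP[adj_vx nadj_vw]] :=
  noncorner_witness adj_sym x_S2 (S2_S1 w_S2) x_below_w.
rewrite !inE => /orP[]/eqP vE; rewrite vE in adj_vx nadj_vw.
  by rewrite adj_sym adj_wu in nadj_vw.
by move: nadj_w2x; rewrite (nbhd_sub_adj u2_under_w2 (S2_S1 x_S2) adj_vx).
Qed.

End FiveCorners.

Lemma no_configuration : #|C2| = 4 \/ #|C2| = 5 /\ #|C1| = 2 -> False.
Proof.
case=> [|[C2_5 C1_2]]; first exact: four_corners_contra.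
have [y y_C2 y_new] : exists2 y, y \in C2 & y \notin [:: h; x; w; z].
  apply/subsetPn/negP => /subset_leq_card; rewrite C2_5 => le5.
  by have := leq_trans le5 (card_size [:: h; x; w; z]).
exact: (five_corners_contra y_C2 y_new C2_5 C1_2).
Qed.

End Configuration.

Lemma corner_config_contra c1 c2 h : S3 = [set c1; c2] -> adj c1 c2 ->
  ~~ dominates adj c1 S2 -> ~~ dominates adj c2 S2 ->
  h \in C2 -> {in C1, forall v, adj h v} -> N2 h \proper N2 c1 ->
  #|C2| = 4 \/ #|C2| = 5 /\ #|C1| = 2 -> False.
Proof.
move=> S3E c1c2 ndom1 ndom2 hC2 hC1 hc1.
have S3E' : S3 = [set c2; c1] by rewrite setUC.
have c2c1 : adj c2 c1 by rewrite adj_sym.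
have [c1S2 c2S2] : c1 \in S2 /\ c2 \in S2 by rewrite !S3_S2 // S3E !inE eqxx ?orbT.
have [x xC2 /andP[c1x xc2]] := far_corner S3E c1c2 ndom1.
have [z zC2 /andP[c2z zc1]] := far_corner S3E' c2c1 ndom2.
have [u uC1 /andP[ux uc2]] := noncorner_witness adj_sym (C2_S2 xC2) (S2_S1 c2S2) xc2.
have [u2 u2C1 /andP[u2z u2c1]] := noncorner_witness adj_sym (C2_S2 zC2) (S2_S1 c1S2) zc1.
have [w wS2 uw] := strict_corner_dominator uC1.
have [w2 w2S2 u2w2] := strict_corner_dominator u2C1.
exact: (no_configuration S3E hC2 hC1 hc1 xC2 c1x xc2 uC1 ux uc2 wS2 (proper_sub uw)
  zC2 c2z zc1 u2C1 u2z u2c1 w2S2 (proper_sub u2w2)).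
Qed.

Lemma rank_four_contra : #|C0| = 1 -> #|S3| = 2 -> is_clique adj S3 ->
  ~~ [exists v in S3, dominates adj v S2] ->
  #|C2| = 4 \/ #|C2| = 5 /\ #|C1| = 2 -> False.
Proof.
move=> /exists_C1_dominator[h hS2 hC1] /eqP/cards2P[c1 [c2 [_ S3E]]] S3clique type0 card.
have S3E' : S3 = [set c2; c1] by rewrite setUC.
have [c1S3 c2S3] : c1 \in S3 /\ c2 \in S3 by rewrite S3E !inE !eqxx orbT.
have c1c2 : adj c1 c2 := forall_inP (forall_inP S3clique c1 c1S3) c2 c2S3.
have c2c1 : adj c2 c1 by rewrite adj_sym.
have [ndom1 ndom2] : ~~ dominates adj c1 S2 /\ ~~ dominates adj c2 S2.
  by split; apply: contra type0 => dom; apply/exists_inP; [exists c1 | exists c2].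
have [hC2|hNC2] := boolP (h \in C2).
  have [c] := corner_below hC2; rewrite S3E !inE => /orP[]/eqP-> hc.
    exact: corner_config_contra S3E c1c2 ndom1 ndom2 hC2 hC1 hc card.
  exact: corner_config_contra S3E' c2c1 ndom2 ndom1 hC2 hC1 hc card.
have : h \in S3 by rewrite in_gseqS hNC2.
rewrite S3E !inE => /orP[]/eqP hE; rewrite hE in hC1.
  by move: ndom2; rewrite (top_dominates S3E c1c2 hC1).
by move: ndom1; rewrite (top_dominates S3E' c2c1 hC1).
Qed.

End RankFour.

Lemma rank_card_vector4 (T : finType) (adj : rel T) a x4 x3 x2 x1 :
  rank_card_vector adj a = [:: x4; x3; x2; x1] ->
  [/\ a = 4, #|gseq adj 3| = x4, #|strict_corners adj (gseq adj 2)| = x3,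
      #|strict_corners adj (gseq adj 1)| = x2 & #|strict_corners adj [set: T]| = x1].
Proof.
move=> vec; have := congr1 size vec; rewrite size_map size_rev size_iota => a4.
by move: vec; rewrite a4 => -[]; split.
Qed.

Lemma not_zero_realizable x3 x2 :
  x3 = 4 \/ x3 = 5 /\ x2 = 2 -> ~ zero_realizable [:: 2; x3; x2; 1].
Proof.
move=> card [T [adj [a [[refl sym _] [[_ [S3clique _]] _ type0 vec]]]]].
have [a4 S3_2 C2_x3 C1_x2 C0_1] := rank_card_vector4 vec; subst a.
by apply: rank_four_contra refl sym C0_1 S3_2 S3clique type0 _; rewrite C2_x3 C1_x2.
Qed.

Theorem theorem3p26 :
  (forall k : nat, 1 <= k -> ~ zero_realizable [:: 2; 4; k; 1]) /\
  ~ zero_realizable [:: 2; 5; 2; 1].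
Proof. by split=> [k _|]; apply: not_zero_realizable; [left | right]. Qed.
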